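(* Let $D:\mathbb R^2\setminus\{0\}\to\mathbb R$ be nonnegative, bounded and continuously differentiable, and consider $\ddot x+D(x)\dot x=-x/|x|^3$, $x\in\mathbb R^2\setminus\{0\}$. Let $r_A,r_B,T>0$. There exists $M>0$ (depending only on $r_A,r_B,T$) such that every solution $x:[-T,0]\to\mathbb R^2\setminus\{0\}$ of this equation with $|x(-T)|=r_A$ and $|x(0)|=r_B$ satisfies $|\dot x(0)|<M$.
   Context: Solutions are twice continuously differentiable and avoid the origin. *)

From Stdlib Require Import Reals.
From Coquelicot Require Import Coquelicot.
Open Scope R_scope.

Definition norm2 (a b : R) : R := sqrt (a ^ 2 + b ^ 2).

Definition nonzero2 (a b : R) : Prop := ~ (a = 0 /\ b = 0).

Definition damping_nonneg (D : R -> R -> R) : Prop :=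
  forall a b, nonzero2 a b -> 0 <= D a b.

Definition damping_bounded (D : R -> R -> R) : Prop :=
  exists K, forall a b, nonzero2 a b -> Rabs (D a b) <= K.

Definition C1_punctured (D : R -> R -> R) : Prop :=
  exists Dx Dy : R -> R -> R,
    forall a b, nonzero2 a b ->
      differentiable_pt_lim D a b (Dx a b) (Dy a b) /\
      continuity_2d_pt Dx a b /\ continuity_2d_pt Dy a b.

Definition C2 (f : R -> R) : Prop :=
  forall t, ex_derive f t /\ ex_derive (Derive f) t /\
            continuous (Derive (Derive f)) t.

Definition is_solution (D : R -> R -> R) (T : R) (x1 x2 : R -> R) : Prop :=
  C2 x1 /\ C2 x2 /\
  forall t, -T <= t <= 0 ->
    nonzero2 (x1 t) (x2 t) /\
    Derive (Derive x1) t + D (x1 t) (x2 t) * Derive x1 t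
      = - x1 t / (norm2 (x1 t) (x2 t)) ^ 3 /\
    Derive (Derive x2) t + D (x1 t) (x2 t) * Derive x2 t
      = - x2 t / (norm2 (x1 t) (x2 t)) ^ 3.

From Stdlib Require Import Reals Lra.
From Coquelicot Require Import Coquelicot.
Open Scope R_scope.

(* Along a solution the energy E = |x'|^2/2 - 1/|x| satisfies E' = -D |x'|^2 <= 0, so a
   large speed at time 0 forces |x'|^2 > b^2 + 2/|x| on the whole of [-T, 0].  On such a
   fast arc the quantity W = <x, x'>/|x'| has, the damping terms cancelling,
   W' = |x'| - 1/(|x| |x'|) + <x, x'>^2/(|x|^3 |x'|^3) >= |x'|/2 > b/2, so W increases by
   more than b T/2 over [-T, 0].  As |W| <= |x|, this is impossible once b T/2 = rA + rB. *)

Lemma norm2_sq (a b : R) : norm2 a b ^ 2 = a ^ 2 + b ^ 2.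
Proof. unfold norm2. rewrite pow2_sqrt; nra. Qed.

Lemma sum_sq_pos (a b : R) : nonzero2 a b -> 0 < a ^ 2 + b ^ 2.
Proof.
intros hab. destruct (Req_dec a 0) as [-> | ha].
- assert (hb : b <> 0) by (intros ->; apply hab; auto).
  apply Rsqr_pos_lt in hb. rewrite Rsqr_pow2 in hb. nra.
- apply Rsqr_pos_lt in ha. rewrite Rsqr_pow2 in ha. nra.
Qed.

Lemma Rabs_dot_div_norm2_le (a b c d : R) : 0 < c ^ 2 + d ^ 2 ->
  Rabs ((a * c + b * d) / norm2 c d) <= norm2 a b.
Proof.
intros hcd. unfold norm2.
assert (hn : 0 < sqrt (c ^ 2 + d ^ 2)) by (apply sqrt_lt_R0; lra).
assert (hCS : Rabs (a * c + b * d) <= sqrt (a ^ 2 + b ^ 2) * sqrt (c ^ 2 + d ^ 2)).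
{ pose proof (sqrt_cauchy a b c d) as hp. pose proof (sqrt_cauchy (- a) (- b) c d) as hm.
  rewrite !Rsqr_pow2 in hp, hm. replace ((- a) ^ 2 + (- b) ^ 2) with (a ^ 2 + b ^ 2) in hm by ring.
  apply Rabs_le. lra. }
unfold Rdiv. rewrite Rabs_mult, Rabs_inv, (Rabs_pos_eq (sqrt _)) by lra.
apply (Rmult_le_reg_r (sqrt (c ^ 2 + d ^ 2))); [lra|].
field_simplify; lra.
Qed.

Lemma mean_value_closed (f f' : R -> R) (a b : R) : a < b ->
  (forall t, a <= t <= b -> is_derive f t (f' t)) ->
  exists c, a <= c <= b /\ f b - f a = f' c * (b - a).
Proof.
intros hab hf.
destruct (MVT_gen f a b f') as [c [hc e]].
- intros t ht. rewrite Rmin_left, Rmax_right in ht by lra. apply hf; lra.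
- intros t ht. rewrite Rmin_left, Rmax_right in ht by lra.
  apply continuity_pt_filterlim, (@ex_derive_continuous R_AbsRing R_NormedModule).
  exists (f' t). apply hf; lra.
- rewrite Rmin_left, Rmax_right in hc by lra. eauto.
Qed.

Definition energy (x1 x2 : R -> R) (t : R) : R :=
  (Derive x1 t ^ 2 + Derive x2 t ^ 2) / 2 - 1 / norm2 (x1 t) (x2 t).

Definition velocity_projection (x1 x2 : R -> R) (t : R) : R :=
  (x1 t * Derive x1 t + x2 t * Derive x2 t) / norm2 (Derive x1 t) (Derive x2 t).

(* auto_derive leaves its goals with eta-expanded [Derive (fun y => f y) t]. *)
Ltac eta_contract_derive :=
  repeat match goal with
  | |- context [Derive (fun y => ?f y) ?t] => change (Derive (fun y => f y) t) with (Derive f t)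
  end.

Section Pointwise.

Variables (x1 x2 : R -> R) (c t : R).
Hypotheses (dx1 : ex_derive x1 t) (dx2 : ex_derive x2 t)
  (ddx1 : ex_derive (Derive x1) t) (ddx2 : ex_derive (Derive x2) t).
Hypothesis hx : nonzero2 (x1 t) (x2 t).
Hypothesis eq1 :
  Derive (Derive x1) t + c * Derive x1 t = - x1 t / (norm2 (x1 t) (x2 t)) ^ 3.
Hypothesis eq2 :
  Derive (Derive x2) t + c * Derive x2 t = - x2 t / (norm2 (x1 t) (x2 t)) ^ 3.

Lemma is_derive_energy :
  is_derive (energy x1 x2) t (- c * (Derive x1 t ^ 2 + Derive x2 t ^ 2)).
Proof.
pose proof (sum_sq_pos _ _ hx) as hr.
pose proof (sqrt_lt_R0 _ hr) as hq.
unfold energy, norm2 in *.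
auto_derive.
- repeat split; auto; try nra. apply Rgt_not_eq, sqrt_lt_R0. nra.
- eta_contract_derive.
  set (q := sqrt (x1 t ^ 2 + x2 t ^ 2)) in *.
  replace (sqrt _) with q by (unfold q; f_equal; ring).
  replace (Derive (Derive x1) t) with (- x1 t / q ^ 3 - c * Derive x1 t) by lra.
  replace (Derive (Derive x2) t) with (- x2 t / q ^ 3 - c * Derive x2 t) by lra.
  field. lra.
Qed.

Lemma is_derive_velocity_projection :
  0 < Derive x1 t ^ 2 + Derive x2 t ^ 2 ->
  let q := norm2 (x1 t) (x2 t) in
  let S := norm2 (Derive x1 t) (Derive x2 t) in
  let p := x1 t * Derive x1 t + x2 t * Derive x2 t in
  is_derive (velocity_projection x1 x2) t (S - 1 / (q * S) + p ^ 2 / (q ^ 3 * S ^ 3)).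
Proof.
intros hs q S p.
pose proof (sum_sq_pos _ _ hx) as hr.
assert (hq : 0 < q) by (apply sqrt_lt_R0; lra).
assert (hS : 0 < S) by (apply sqrt_lt_R0; lra).
assert (hq2 : x1 t ^ 2 + x2 t ^ 2 = q ^ 2) by (symmetry; apply norm2_sq).
assert (hS2 : Derive x1 t ^ 2 + Derive x2 t ^ 2 = S ^ 2) by (symmetry; apply norm2_sq).
unfold velocity_projection, norm2.
auto_derive.
- repeat split; auto; try nra. apply Rgt_not_eq, sqrt_lt_R0. nra.
- eta_contract_derive.
  replace (sqrt _) with S by (unfold S, norm2; f_equal; ring).
  replace (Derive (Derive x1) t) with (- x1 t / q ^ 3 - c * Derive x1 t) by (unfold q; lra).
  replace (Derive (Derive x2) t) with (- x2 t / q ^ 3 - c * Derive x2 t) by (unfold q; lra).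
  transitivity ((Derive x1 t ^ 2 + Derive x2 t ^ 2 - (x1 t ^ 2 + x2 t ^ 2) / q ^ 3 - c * p) / S
                + p * (p / q ^ 3 + c * (Derive x1 t ^ 2 + Derive x2 t ^ 2)) / S ^ 3).
  + unfold p. field. lra.
  + rewrite hq2, hS2. field. lra.
Qed.

End Pointwise.

Lemma projection_rate_ge_half_speed (q S p : R) :
  0 < q -> 0 < S -> 2 / q <= S ^ 2 ->
  S / 2 <= S - 1 / (q * S) + p ^ 2 / (q ^ 3 * S ^ 3).
Proof.
intros hq hS hqS.
assert (h1 : 1 / (q * S) <= S / 2).
{ replace (1 / (q * S)) with ((2 / q) / (2 * S)) by (field; lra).
  apply (Rmult_le_reg_r (2 * S)); [lra|].
  replace (2 / q / (2 * S) * (2 * S)) with (2 / q) by (field; lra). nra. }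
assert (h2 : 0 <= p ^ 2 / (q ^ 3 * S ^ 3)).
{ apply Rdiv_le_0_compat; [apply pow2_ge_0 | apply Rmult_lt_0_compat; apply pow_lt; lra]. }
lra.
Qed.

Section Solution.

Variables (D : R -> R -> R) (T : R) (x1 x2 : R -> R).
Hypotheses (hD : damping_nonneg D) (hsol : is_solution D T x1 x2).

Lemma is_derive_energy_solution (t : R) : -T <= t <= 0 ->
  is_derive (energy x1 x2) t (- D (x1 t) (x2 t) * (Derive x1 t ^ 2 + Derive x2 t ^ 2)).
Proof.
intros ht. destruct hsol as [h1 [h2 h]]. destruct (h t ht) as [hx [e1 e2]].
apply is_derive_energy; auto; [apply h1 | apply h2 | apply h1 | apply h2].
Qed.

Lemma energy_nonincreasing (s t : R) : -T <= s <= t -> t <= 0 ->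
  energy x1 x2 t <= energy x1 x2 s.
Proof.
intros hs ht. destruct (Req_dec s t) as [-> | hst]; [lra|].
destruct (mean_value_closed (energy x1 x2)
  (fun u => - D (x1 u) (x2 u) * (Derive x1 u ^ 2 + Derive x2 u ^ 2)) s t)
  as [c [hc e]]; [lra | intros u hu; apply is_derive_energy_solution; lra |].
destruct hsol as [_ [_ h]]. destruct (h c ltac:(lra)) as [hx _].
pose proof (hD _ _ hx).
assert (0 <= D (x1 c) (x2 c) * (Derive x1 c ^ 2 + Derive x2 c ^ 2)) by
  (apply Rmult_le_pos; nra).
nra.
Qed.

Lemma speed_sq_ge_energy (t : R) : -T <= t <= 0 ->
  2 * energy x1 x2 0 + 2 / norm2 (x1 t) (x2 t) <= Derive x1 t ^ 2 + Derive x2 t ^ 2.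
Proof.
intros ht. pose proof (energy_nonincreasing t 0 ltac:(lra) ltac:(lra)) as hE.
unfold energy, Rdiv in *. lra.
Qed.

Lemma norm2_solution_pos (t : R) : -T <= t <= 0 -> 0 < norm2 (x1 t) (x2 t).
Proof.
intros ht. destruct hsol as [_ [_ h]]. apply sqrt_lt_R0, sum_sq_pos, (h t ht).
Qed.

Lemma speed_sq_pos (b t : R) : -T <= t <= 0 ->
  b ^ 2 + 2 / norm2 (x1 t) (x2 t) < Derive x1 t ^ 2 + Derive x2 t ^ 2 ->
  0 < Derive x1 t ^ 2 + Derive x2 t ^ 2.
Proof.
intros ht hfast. pose proof (norm2_solution_pos t ht) as hq.
assert (0 < 2 / norm2 (x1 t) (x2 t)) by (apply Rdiv_lt_0_compat; lra).
nra.
Qed.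

Lemma velocity_projection_increment_gt (b : R) : 0 < T -> 0 <= b ->
  (forall t, -T <= t <= 0 ->
     b ^ 2 + 2 / norm2 (x1 t) (x2 t) < Derive x1 t ^ 2 + Derive x2 t ^ 2) ->
  b / 2 * T < velocity_projection x1 x2 0 - velocity_projection x1 x2 (-T).
Proof.
intros hT hb hfast.
destruct hsol as [h1 [h2 h]].
destruct (mean_value_closed (velocity_projection x1 x2)
  (fun u => let q := norm2 (x1 u) (x2 u) in
            let S := norm2 (Derive x1 u) (Derive x2 u) in
            let p := x1 u * Derive x1 u + x2 u * Derive x2 u in
            S - 1 / (q * S) + p ^ 2 / (q ^ 3 * S ^ 3)) (-T) 0)
  as [c [hc e]]; [lra | |].
- intros u hu. destruct (h u hu) as [hx [e1 e2]].
  apply is_derive_velocity_projection with (c := D (x1 u) (x2 u));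
    auto; [apply h1 | apply h2 | apply h1 | apply h2 | apply (speed_sq_pos b u hu), hfast, hu].
- cbv zeta in e. rewrite e.
  pose proof (norm2_solution_pos c hc) as hq. pose proof (hfast c hc) as hfc.
  pose proof (speed_sq_pos b c hc hfc) as hs.
  set (S := norm2 (Derive x1 c) (Derive x2 c)) in *.
  assert (hS2 : S ^ 2 = Derive x1 c ^ 2 + Derive x2 c ^ 2) by apply norm2_sq.
  assert (hS : 0 < S) by (apply sqrt_lt_R0; lra).
  assert (hqS : 0 < 2 / norm2 (x1 c) (x2 c)) by (apply Rdiv_lt_0_compat; lra).
  assert (hbS : b < S).
  { apply Rnot_le_lt. intros hSb. assert (S ^ 2 <= b ^ 2) by (apply pow_incr; lra). lra. }
  pose proof (projection_rate_ge_half_speed (norm2 (x1 c) (x2 c)) S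
    (x1 c * Derive x1 c + x2 c * Derive x2 c) hq hS ltac:(nra)).
  nra.
Qed.

End Solution.

Theorem proposition4p2 (rA rB T : R) (hrA : 0 < rA) (hrB : 0 < rB) (hT : 0 < T) :
  exists M : R, 0 < M /\
    forall (D : R -> R -> R),
      damping_nonneg D -> damping_bounded D -> C1_punctured D ->
      forall x1 x2 : R -> R,
        is_solution D T x1 x2 ->
        norm2 (x1 (- T)) (x2 (- T)) = rA ->
        norm2 (x1 0) (x2 0) = rB ->
        norm2 (Derive x1 0) (Derive x2 0) < M.
Proof.
set (a := 2 / rB). set (b := 2 * (rA + rB) / T).
assert (ha : 0 < a) by (apply Rdiv_lt_0_compat; lra).
assert (hb : 0 < b) by (apply Rdiv_lt_0_compat; lra).
exists (1 + a + b). split; [lra|].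
intros D hD _ _ x1 x2 hsol hA hB.
apply Rnot_le_lt. intros hfast0.
assert (hE : b ^ 2 / 2 < energy x1 x2 0).
{ assert (hs0 : (1 + a + b) ^ 2 <= Derive x1 0 ^ 2 + Derive x2 0 ^ 2)
    by (rewrite <- norm2_sq; apply pow_incr; lra).
  unfold energy. rewrite hB. replace (1 / rB) with (a / 2) by (unfold a; field; lra). nra. }
assert (hfast : forall t, -T <= t <= 0 ->
  b ^ 2 + 2 / norm2 (x1 t) (x2 t) < Derive x1 t ^ 2 + Derive x2 t ^ 2).
{ intros t ht. pose proof (speed_sq_ge_energy D T x1 x2 hD hsol t ht). lra. }
pose proof (velocity_projection_increment_gt D T x1 x2 hsol b hT (Rlt_le _ _ hb) hfast) as hinc.
assert (hW : forall t, -T <= t <= 0 ->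
  Rabs (velocity_projection x1 x2 t) <= norm2 (x1 t) (x2 t)).
{ intros t ht. apply Rabs_dot_div_norm2_le, (speed_sq_pos D T x1 x2 hsol b t ht), hfast, ht. }
pose proof (proj1 (Rabs_le_between _ _) (hW 0 ltac:(lra))) as hW0.
pose proof (proj1 (Rabs_le_between _ _) (hW (-T) ltac:(lra))) as hWT.
assert (b / 2 * T = rA + rB) by (unfold b; field; lra).
lra.
Qed.
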